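(* Let $A\in\mathbb{R}^{n\times n}$ and $B\in\mathbb{R}^{n\times m}$ define the discrete-time system $x^+=Ax+Bu$. Let $\mathrm{S}\in\mathbb{R}^{n_s\times n}$ be such that $\mathcal{S}:=\{x\in\mathbb{R}^n:\mathrm{S}x\le \mathbf{1}\}$ is a C-set, and let $\mathrm{U}\in\mathbb{R}^{n_u\times m}$ be such that $\mathcal{U}:=\{u\in\mathbb{R}^m:\mathrm{U}u\le\mathbf{1}\}$ (a polyhedral convex set containing the origin in its interior). Fix $\lambda\in[0,1)$. Let $u_d(0),\dots,u_d(T-1)\in\mathbb{R}^m$ be an input sequence and $x_d(0),\dots,x_d(T)\in\mathbb{R}^n$ the corresponding states with $x_d(k+1)=Ax_d(k)+Bu_d(k)$, and set $U_{0,T}:=[u_d(0)\ \cdots\ u_d(T-1)]$, $X_{0,T}:=[x_d(0)\ \cdots\ x_d(T-1)]$, $X_{1,T}:=[x_d(1)\ \cdots\ x_d(T)]$. Assume the matrix $\Theta:=\begin{bmatrix}U_{0,T}\\ X_{0,T}\end{bmatrix}$ has full row rank. Then there exists a matrix $K\in\mathbb{R}^{m\times n}$ such that $\mathcal{S}$ is $\lambda$-contractive for $x^+=(A+BK)x$ and admissible for $\mathcal{U}$ if and only if there exist matrices $G_K\in\mathbb{R}^{T\times n}$ and $P\in\mathbb{R}^{n_s\times n_s}$ with $P\ge0$ such that $P\mathbf{1}\le\lambda\mathbf{1}$, $\;P\mathrm{S}=\mathrm{S}X_{1,T}G_K$, $\;\mathrm{U}U_{0,T}G_K s\le\mathbf{1}$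 for all vertices $s$ of $\mathcal{S}$, and $I_n=X_{0,T}G_K$. Moreover, any such controller $K$ can be expressed as $K=U_{0,T}G_K$ for some $G_K$ satisfying these conditions (together with some $P\ge 0$).
   Context: $\mathbf{1}$ denotes the vector of all ones of appropriate dimension; inequalities between vectors/matrices are entrywise. A C-set is a convex compact subset of $\mathbb{R}^n$ containing the origin as an interior point. For $\mu\ge0$, $\mu\mathcal{S}:=\{\mu x:x\in\mathcal{S}\}$. A C-set $\mathcal{S}$ is $\lambda$-contractive for $x^+=Fx$ (with $\lambda\in[0,1)$) if for each $x\in\mathcal{S}$, $\inf\{\lambda'\ge0: Fx\in\lambda'\mathcal{S}\}\le\lambda$. $\mathcal{S}$ is admissible for $\mathcal{U}$ (with gain $K$) if $Kx\in\mathcal{U}$ for every $x\in\mathcal{S}$. *)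

From HB Require Import structures.
From mathcomp Require Import all_boot all_order all_algebra.
From mathcomp Require Import all_classical all_reals all_analysis.
Set Implicit Arguments. Unset Strict Implicit. Unset Printing Implicit Defensive.
Import Order.TTheory GRing.Theory Num.Theory.
Import numFieldNormedType.Exports.
Local Open Scope classical_set_scope.
Local Open Scope ring_scope.

Definition mxle (R : realType) (p q : nat) (M N : 'M[R]_(p, q)) : Prop :=
  forall i j, M i j <= N i j.

Definition polyset (R : realType) (p q : nat) (M : 'M[R]_(p, q)) : set 'cV[R]_q :=
  [set x | mxle (M *m x) (const_mx 1)].

Definition convex_set (R : realType) (n : nat) (S : set 'cV[R]_n) : Prop :=
  forall x y (t : R), S x -> S y -> 0 <= t <= 1 -> S (t *: x + (1 - t) *: y).

Definition Cset (R : realType) (n : nat) (S : set 'cV[R]_n) : Prop :=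
  convex_set S /\ compact S /\ (interior S) 0.

Definition scale_set (R : realType) (n : nat) (mu : R) (S : set 'cV[R]_n) : set 'cV[R]_n :=
  [set mu *: x | x in S].

Definition contractive (R : realType) (n : nat) (F : 'M[R]_n) (S : set 'cV[R]_n) (lam : R) : Prop :=
  forall x, S x -> inf [set l : R | 0 <= l /\ scale_set l S (F *m x)] <= lam.

Definition admissible (R : realType) (n m : nat) (K : 'M[R]_(m, n)) (S : set 'cV[R]_n)
  (U : set 'cV[R]_m) : Prop :=
  forall x, S x -> U (K *m x).

Definition vertex (R : realType) (n : nat) (S : set 'cV[R]_n) (s : 'cV[R]_n) : Prop :=
  S s /\ forall x y (t : R), S x -> S y -> 0 < t < 1 -> s = t *: x + (1 - t) *: y -> x = y.

Definition dataU (R : realType) (m T : nat) (ud : nat -> 'cV[R]_m) : 'M[R]_(m, T) :=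
  \matrix_(i < m, j < T) ud j i 0.
Definition dataX0 (R : realType) (n T : nat) (xd : nat -> 'cV[R]_n) : 'M[R]_(n, T) :=
  \matrix_(i < n, j < T) xd j i 0.
Definition dataX1 (R : realType) (n T : nat) (xd : nat -> 'cV[R]_n) : 'M[R]_(n, T) :=
  \matrix_(i < n, j < T) xd j.+1 i 0.

From HB Require Import structures.
From mathcomp Require Import all_boot all_order all_algebra.
From mathcomp Require Import all_classical all_reals all_analysis.
From mathcomp Require Import ring lra.
Set Implicit Arguments. Unset Strict Implicit. Unset Printing Implicit Defensive.
Import Order.TTheory GRing.Theory Num.Theory.
Import numFieldNormedType.Exports.
Local Open Scope classical_set_scope.
Local Open Scope ring_scope.

(* Contractivity of the polyhedron {x | S x <= 1} under F with rate lambda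
   means that every row of S F is bounded by lambda on the polyhedron; by the
   affine Farkas lemma (obtained from the conic one by homogenization) this
   holds iff S F = P S for some P >= 0 with P 1 <= lambda 1.  Admissibility
   only has to be checked at vertices, since a linear functional attains its
   maximum over a compact set at an extreme point (found by maximizing the
   coordinates lexicographically on nested faces).  Finally, full row rank of
   [U0; X0] yields for every gain K some G with U0 G = K and X0 G = I, and
   then A + B K = X1 G. *)

Section ConicFarkas.
Variable R : realFieldType.

Definition dot k (u : 'rV[R]_k) (x : 'cV[R]_k) : R := (u *m x) 0 0.

Lemma dotBl k (u w : 'rV[R]_k) x : dot (u - w) x = dot u x - dot w x.
Proof. by rewrite /dot mulmxBl !mxE. Qed.

Lemma dotZl k (u : 'rV[R]_k) x c : dot (c *: u) x = c * dot u x.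
Proof. by rewrite /dot -scalemxAl !mxE. Qed.

Lemma dotBr k (u : 'rV[R]_k) x y : dot u (x - y) = dot u x - dot u y.
Proof. by rewrite /dot mulmxBr !mxE. Qed.

Lemma dotZr k (u : 'rV[R]_k) x c : dot u (c *: x) = c * dot u x.
Proof. by rewrite /dot -scalemxAr !mxE. Qed.

Lemma dot_tr_gt0 k (u : 'rV[R]_k) : u != 0 -> 0 < dot u u^T.
Proof.
move=> u0; have sqr_ge0 i : 0 <= u 0 i * u 0 i by rewrite -expr2 sqr_ge0.
rewrite /dot mxE (eq_bigr (fun i => u 0 i * u 0 i)) => [|i _]; last by rewrite mxE.
rewrite lt_def sumr_ge0 ?andbT //.
apply: contra u0 => /eqP/(psumr_eq0P (fun i _ => sqr_ge0 i)) sum0.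
apply/eqP/rowP => i; rewrite mxE.
by have /eqP := sum0 i isT; rewrite mulf_eq0 orbb => /eqP.
Qed.

Fixpoint in_cone k (s : seq 'rV[R]_k) (b : 'rV[R]_k) : Prop :=
  if s is a :: s' then exists2 y, 0 <= y & in_cone s' (b - y *: a) else b = 0.

Lemma in_cone_sum k (I : eqType) (r : seq I) (f : I -> 'rV[R]_k) b :
  uniq r -> in_cone (map f r) b ->
  exists2 y : I -> R, (forall i, 0 <= y i) & b = \sum_(i <- r) y i *: f i.
Proof.
elim: r b => [|i r IH] b /=.
  by move=> _ ->; exists (fun=> 0); rewrite ?big_nil.
move=> /andP[ir ur] [y0 y0_ge0 /(IH _ ur)[y y_ge0 bE]].
exists (fun j => if j == i then y0 else y j) => [j|]; first by case: eqP.
rewrite big_cons eqxx (eq_big_seq (fun j => y j *: f j)) => [|j jr].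
  by rewrite -bE addrC subrK.
by case: eqP => // ji; rewrite -ji jr in ir.
Qed.

Lemma in_cone_shift k (a : 'rV[R]_k) (phi : 'rV[R]_k -> R) (s : seq 'rV[R]_k) v :
  (forall w, w \in s -> phi w <= 0) ->
  in_cone [seq w - phi w *: a | w <- s] v -> exists2 t, t <= 0 & in_cone s (v + t *: a).
Proof.
elim: s v => [|w s IH] v /= phi_le0.
  by move=> ->; exists 0; rewrite ?scale0r ?addr0.
have phiw : phi w <= 0 by apply: phi_le0; rewrite mem_head.
move=> [y y_ge0 /IH[w' sw|t t_le0 vt]]; first by apply: phi_le0; rewrite in_cons sw orbT.
exists (y * phi w + t); first by nra.
exists y => //; congr (in_cone s _): vt.
by apply/rowP => i; rewrite !mxE; ring.
Qed.

Lemma farkas_cone k (s : seq 'rV[R]_k) b :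
  in_cone s b \/ exists x, (forall a, a \in s -> dot a x <= 0) /\ 0 < dot b x.
Proof.
have [l] := ubnP (size s); elim: l s b => // l IH [|a s] b /= sz_s.
  have [->|b0] := eqVneq b 0; first by left.
  by right; exists b^T; split => //; apply: dot_tr_gt0.
have [b_in|[x [sx bx]]] := IH s b sz_s.
  by left; exists 0; rewrite ?scale0r ?subr0.
have [ax_le0|ax_gt0] := leP (dot a x) 0.
  by right; exists x; split => // a'; rewrite in_cons => /predU1P[->|/sx].
pose phi v := dot v x / dot a x.
pose proj v := v - phi v *: a.
have ax_neq0 : dot a x != 0 by rewrite gt_eqF.
have := IH (map proj s) (proj b); rewrite size_map => /(_ sz_s)[|[x' [sx' bx']]].
  move=> /in_cone_shift[w sw|t t_le0 bt].
    by rewrite /phi pmulr_lle0 ?invr_gt0 //; apply: sx.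
  have phib_gt0 : 0 < phi b by apply: divr_gt0.
  left; exists (phi b - t); first lra.
  by congr (in_cone s _): bt; apply/rowP => i; rewrite !mxE; ring.
(* [proj] is adjoint to [x' - (a x' / a x) x], which is orthogonal to [a] *)
pose y := x' - (dot a x' / dot a x) *: x.
have proj_adj v : dot (proj v) x' = dot v y.
  by rewrite /proj /y /phi dotBl dotZl dotBr dotZr; field.
right; exists y; split; last by rewrite -proj_adj.
move=> a'; rewrite in_cons => /predU1P[->|a's].
  by rewrite /y dotBr dotZr divfK // subrr.
by rewrite -proj_adj; apply/sx'/map_f.
Qed.

End ConicFarkas.

Section Polyhedra.
Variable R : realType.

Lemma polysetP p n (M : 'M[R]_(p, n)) x :
  polyset M x <-> forall j, (M *m x) j 0 <= 1.
Proof.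
split=> [Mx j|Mx j k]; first by have := Mx j 0; rewrite [const_mx _ _ _]mxE.
by rewrite (ord1 k) [const_mx _ _ _]mxE; apply: Mx.
Qed.

Lemma mxle_scale1P p (v : 'cV[R]_p) d :
  mxle v (d *: const_mx 1) <-> forall j, v j 0 <= d.
Proof.
split=> [vd j|vd j k]; first by have := vd j 0; rewrite !mxE mulr1.
by rewrite (ord1 k) !mxE mulr1; apply: vd.
Qed.

Lemma exists_scale_escape (C d tau : R) : 0 <= tau -> d * tau < C ->
  exists2 mu, 0 < mu & mu * tau <= 1 /\ d < mu * C.
Proof.
rewrite le_eqVlt => /predU1P[<-|tau_gt0]; rewrite ?mulr0 => dC.
  exists ((`|d| + 1) / C); first by rewrite divr_gt0 // ltr_wpDl.
  by rewrite mulr0 divfK ?gt_eqF //; split => //; have := ler_norm d; lra.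
exists tau^-1; first by rewrite invr_gt0.
by rewrite mulVf ?gt_eqF // mulrC ltr_pdivlMr.
Qed.

Definition homog n (u : 'rV[R]_n) (q : R) : 'rV[R]_(n + 1) := row_mx u (const_mx q).

Lemma dot_homog n (u : 'rV[R]_n) q (x : 'cV[R]_(n + 1)) :
  dot (homog u q) x = (u *m usubmx x) 0 0 + q * x (rshift n 0) 0.
Proof.
rewrite /dot /homog -{1}(vsubmxK x) mul_row_col mxE [X in _ + X]mxE big_ord1.
by rewrite !mxE.
Qed.

Lemma homog_last n (u : 'rV[R]_n) q : homog u q 0 (rshift n 0) = q.
Proof. by rewrite row_mxEr mxE. Qed.

Lemma farkas_polyset n ns (M : 'M[R]_(ns, n)) (c : 'rV[R]_n) (d : R) :
  (forall x, polyset M x -> (c *m x) 0 0 <= d) ->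
  exists p : 'rV[R]_ns, [/\ forall j, 0 <= p 0 j, p *m M = c & \sum_j p 0 j <= d].
Proof.
move=> Mc.
case: (farkas_cone (homog 0 1 :: map (fun j => homog (row j M) 1) (index_enum 'I_ns))
                   (homog c d)) => [[z z_ge0]|[x [gen_x b_x]]].
  move=> /in_cone_sum-/(_ (index_enum_uniq _))[y y_ge0 cdE].
  exists (\row_j y j); split=> [j||]; first by rewrite mxE.
  - rewrite mulmx_sum_row; have := congr1 lsubmx cdE.
    rewrite linearB linearZ /= !row_mxKl scaler0 subr0 linear_sum /= => ->.
    by apply: eq_bigr => j _; rewrite linearZ /= row_mxKl mxE.
  - under eq_bigr do rewrite mxE.
    have := congr1 (fun v : 'rV[R]_(n + 1) => v 0 (rshift n 0)) cdE.
    rewrite summxE (eq_bigr (fun k => y k)) => [|k _]; last by rewrite mxE homog_last mulr1.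
    by rewrite mxE homog_last mxE mxE homog_last; lra.
(* the separating vector is [(x, -tau)]; a rescaling of [x] violates [Mc] *)
pose tau := - x (rshift n 0) 0.
have tau_ge0 : 0 <= tau.
  by have := gen_x _ (mem_head _ _); rewrite dot_homog mul0mx mxE /tau; lra.
have [mu mu_gt0 [mu_tau d_lt]] :
    exists2 mu, 0 < mu & mu * tau <= 1 /\ d < mu * (c *m usubmx x) 0 0.
  by apply: exists_scale_escape => //; move: b_x; rewrite dot_homog /tau; lra.
suff : (c *m (mu *: usubmx x)) 0 0 <= d by rewrite -scalemxAr mxE; lra.
apply/Mc/polysetP => j; rewrite -scalemxAr mxE.
have : dot (homog (row j M) 1) x <= 0.
  apply: gen_x; rewrite in_cons (map_f (fun j => homog (row j M) 1)) ?orbT //.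
  exact: mem_index_enum.
rewrite dot_homog -row_mul mxE => Mx.
by apply: le_trans mu_tau; apply: ler_wpM2l; [exact: ltW | rewrite /tau; lra].
Qed.

Lemma polyset_sub_halfspacesP n ns q (M : 'M[R]_(ns, n)) (N : 'M[R]_(q, n)) d :
  (forall x, polyset M x -> mxle (N *m x) (d *: const_mx 1)) <->
  exists P : 'M[R]_(q, ns),
    [/\ mxle (0 : 'M[R]_(q, ns)) P,
        mxle (P *m const_mx 1) (d *: const_mx 1 : 'cV_q) & P *m M = N].
Proof.
split=> [MN|[P [P_ge0 P1 PM]] x /polysetP Mx].
  have /choice[p pP] : forall i, exists p : 'rV[R]_ns,
      [/\ forall j, 0 <= p 0 j, p *m M = row i N & \sum_j p 0 j <= d].
    move=> i; apply: farkas_polyset => x /MN/mxle_scale1P/(_ i).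
    by rewrite -row_mul !mxE.
  exists (\matrix_i p i); split=> [i j||].
  - by rewrite !mxE; case: (pP i).
  - apply/mxle_scale1P => i; have [_ _ pd] := pP i; apply: le_trans pd.
    by rewrite mxE; under eq_bigr do rewrite !mxE mulr1.
  - by apply/row_matrixP => i; rewrite row_mul rowK; case: (pP i).
apply/mxle_scale1P => i; rewrite -PM -mulmxA.
apply: le_trans (_ : (P *m const_mx 1) i 0 <= d); last by move/mxle_scale1P: P1.
rewrite [leLHS]mxE [leRHS]mxE; apply: ler_sum => j _; rewrite [const_mx _ _ _]mxE.
by apply: ler_wpM2l; [have := P_ge0 i j; rewrite mxE | apply: Mx].
Qed.

Lemma scale_set_polyset_le n ns (M : 'M[R]_(ns, n)) l v :
  0 <= l -> scale_set l (polyset M) v -> forall i, (M *m v) i 0 <= l.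
Proof.
move=> l_ge0 [z /polysetP Mz <-] i; rewrite -scalemxAr mxE.
by rewrite -[leRHS]mulr1 ler_wpM2l.
Qed.

Lemma scale_set_polyset n ns (M : 'M[R]_(ns, n)) l v :
  0 < l -> (forall i, (M *m v) i 0 <= l) -> scale_set l (polyset M) v.
Proof.
move=> l_gt0 Mv; exists (l^-1 *: v); last by rewrite scalerA mulfV ?gt_eqF ?scale1r.
by apply/polysetP => i; rewrite -scalemxAr mxE ler_pdivrMl // mulr1.
Qed.

Lemma polyset_absorbing n ns (M : 'M[R]_(ns, n)) v :
  exists2 l, 0 < l & scale_set l (polyset M) v.
Proof.
have sum_ge0 (P : pred 'I_ns) : 0 <= \sum_(j | P j) `|(M *m v) j 0| by apply: sumr_ge0.
exists (1 + \sum_j `|(M *m v) j 0|); first by have := sum_ge0 predT; lra.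
apply: scale_set_polyset => [|i]; first by have := sum_ge0 predT; lra.
rewrite (bigD1 i) //=; have := ler_norm ((M *m v) i 0).
by have := sum_ge0 (predC1 i); lra.
Qed.

Lemma contractive_polysetP n ns (F : 'M[R]_n) (M : 'M[R]_(ns, n)) lam : 0 <= lam ->
  contractive F (polyset M) lam <->
  forall x, polyset M x -> mxle (M *m (F *m x)) (lam *: const_mx 1).
Proof.
move=> lam_ge0; split=> [contrF x Mx|FM x Mx].
  apply/mxle_scale1P => i; apply: le_trans (contrF x Mx).
  apply: lb_le_inf => [|l [l_ge0 /scale_set_polyset_le]]; last exact.
  by have [l l_gt0 Fx] := polyset_absorbing M (F *m x); exists l; split => //; apply: ltW.
have lbound0 : has_lbound [set l : R | 0 <= l /\ scale_set l (polyset M) (F *m x)].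
  by exists 0 => l [].
apply/ler_addgt0Pr => e e_gt0; apply: ge_inf lbound0 _ _; split; first lra.
apply: scale_set_polyset => [|i]; first lra.
by have /mxle_scale1P/(_ i) := FM x Mx; lra.
Qed.

Lemma contractive_polyhedralP n ns (F : 'M[R]_n) (M : 'M[R]_(ns, n)) lam : 0 <= lam ->
  contractive F (polyset M) lam <->
  exists P : 'M[R]_ns,
    [/\ mxle 0 P, mxle (P *m const_mx 1) (lam *: const_mx 1 : 'cV_ns) & P *m M = M *m F].
Proof.
move=> lam_ge0; rewrite contractive_polysetP // -polyset_sub_halfspacesP.
by split=> FM x /FM; rewrite mulmxA.
Qed.

End Polyhedra.

Section Vertices.
Variables (R : realType) (n : nat).
Implicit Types (S C : set 'cV[R]_n) (f : 'cV[R]_n -> R).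

Definition face S C := C `<=` S /\
  forall p x y (t : R), C p -> S x -> S y -> 0 < t < 1 ->
    p = t *: x + (1 - t) *: y -> C x /\ C y.

Definition affine f :=
  forall x y (t : R), f (t *: x + (1 - t) *: y) = t * f x + (1 - t) * f y.

Lemma continuous_mulmx_row (g : 'rV[R]_n) : continuous (fun x : 'cV[R]_n => (g *m x) 0 0).
Proof.
under eq_fun do rewrite mxE.
apply: continuous_big => [|k _]; first exact: add_continuous.
by move=> x; apply: continuousM; [exact: cst_continuous | exact: coord_continuous].
Qed.

Lemma affine_mulmx_row (g : 'rV[R]_n) : affine (fun x : 'cV[R]_n => (g *m x) 0 0).
Proof. by move=> x y t; rewrite mulmxDr -!scalemxAr !mxE. Qed.

Lemma face_argmax S C f : continuous f -> affine f ->
  C !=set0 -> compact C -> face S C ->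
  exists C', [/\ C' `<=` C, C' !=set0, compact C', face S C' &
                 forall x y, C' x -> C y -> f y <= f x].
Proof.
move=> f_cont f_aff C0 C_cpt [CS C_face].
have [c /[!inE] Cc c_max] := compact_EVT_max C0 C_cpt (continuous_subspaceT f_cont).
have c_maxC y : C y -> f y <= f c by move=> Cy; apply: c_max; rewrite inE.
exists (C `&` [set x | f c <= f x]); split=> [x []//||||].
- by exists c; split=> /=.
- apply: compact_closedI => //.
  apply: (@preimage_closed _ _ f [set x | f c <= x]) => [x _|]; first exact: f_cont.
  exact: closed_ge.
- split=> [x [/CS]//|p x y t [Cp /= fp] Sx Sy t01 pE].
  have [Cx Cy] := C_face p x y t Cp Sx Sy t01 pE.
  move: fp t01; rewrite pE f_aff => fp /andP[t_gt0 t_lt1].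
  have := c_maxC x Cx; have := c_maxC y Cy.
  by split; split => //=; nra.
- by move=> x y [_ /= fx] /c_maxC /le_trans; apply.
Qed.

Lemma face_coord_eq S C k : (k <= n)%N ->
  C !=set0 -> compact C -> face S C ->
  exists C', [/\ C' `<=` C, C' !=set0, compact C', face S C' &
    forall x y, C' x -> C' y -> forall i : 'I_n, (i < k)%N -> x i 0 = y i 0].
Proof.
elim: k => [|k IH] kn C0 C_cpt C_face.
  by exists C; split.
have [C1 [C1C C10 C1_cpt C1_face C1_eq]] := IH (ltnW kn) C0 C_cpt C_face.
pose ik : 'I_n := Ordinal kn.
have ik_aff : affine (fun x => x ik 0) by move=> x y t; rewrite !mxE.
have [C2 [C2C1 C20 C2_cpt C2_face C2_max]] :=
  face_argmax (@coord_continuous R n 1 ik 0) ik_aff C10 C1_cpt C1_face.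
exists C2; split=> // [x /C2C1/C1C //|x y C2x C2y i].
rewrite ltnS leq_eqVlt => /predU1P[ik_eq|ik_lt]; last first.
  exact: C1_eq (C2C1 _ _) (C2C1 _ _) _ _.
have -> : i = ik by apply: val_inj.
by apply/eqP; rewrite eq_le !C2_max //; apply: C2C1.
Qed.

Lemma face_subsingleton_vertex S C p :
  face S C -> C p -> (forall x y, C x -> C y -> x = y) -> vertex S p.
Proof.
move=> [CS C_face] Cp C_eq; split=> [|x y t Sx Sy t01 pE]; first exact: CS.
by have [Cx Cy] := C_face p x y t Cp Sx Sy t01 pE; apply: C_eq.
Qed.

Lemma exists_vertex_argmax S f : continuous f -> affine f ->
  S !=set0 -> compact S -> exists2 p, vertex S p & forall y, S y -> f y <= f p.
Proof.
move=> f_cont f_aff S0 S_cpt.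
have S_face : face S S by split=> // p x y t _.
have [C1 [_ C10 C1_cpt C1_face C1_max]] := face_argmax f_cont f_aff S0 S_cpt S_face.
have [C [CC1 [p Cp] _ C_face C_eq]] := face_coord_eq (leqnn n) C10 C1_cpt C1_face.
exists p => [|y Sy]; last exact: C1_max (CC1 _ Cp) _.
apply: face_subsingleton_vertex C_face Cp _ => x y Cx Cy.
by apply/matrixP => i j; rewrite (ord1 j); apply: C_eq.
Qed.

End Vertices.

Lemma admissible_verticesP (R : realType) n m q (K : 'M[R]_(m, n))
    (S : set 'cV[R]_n) (N : 'M[R]_(q, m)) :
  compact S ->
  admissible K S (polyset N) <-> forall s, vertex S s -> polyset N (K *m s).
Proof.
move=> S_cpt; split=> [adm s [Ss _]|vert x Sx]; first exact: adm.
apply/polysetP => i; pose g := row i (N *m K).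
have gE (y : 'cV[R]_n) : (g *m y) 0 0 = (N *m (K *m y)) i 0 by rewrite mulmxA -row_mul mxE.
have [p /vert/polysetP Kp p_max] := exists_vertex_argmax
  (@continuous_mulmx_row _ _ g) (@affine_mulmx_row _ _ g) (ex_intro _ x Sx) S_cpt.
by rewrite -gE; apply: le_trans (p_max x Sx) _; rewrite gE.
Qed.

Section DataMatrices.
Variables (R : realType) (n m T : nat).

Lemma dataX1E (A : 'M[R]_n) (B : 'M[R]_(n, m)) ud xd :
  (forall k, (k < T)%N -> xd k.+1 = A *m xd k + B *m ud k) ->
  dataX1 T xd = A *m dataX0 T xd + B *m dataU T ud.
Proof.
move=> dyn; apply/matrixP => i j; rewrite !mxE (dyn j (ltn_ord j)) !mxE.
by congr (_ + _); apply: eq_bigr => k _; rewrite !mxE.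
Qed.

Lemma data_right_inverse (U0 : 'M[R]_(m, T)) (X0 : 'M[R]_(n, T)) (K : 'M[R]_(m, n)) :
  \rank (col_mx U0 X0) = (m + n)%N ->
  exists G : 'M[R]_(T, n), U0 *m G = K /\ X0 *m G = 1%:M.
Proof.
move=> rk; have /row_freeP[Q UXQ] : row_free (col_mx U0 X0) by rewrite /row_free rk.
exists (Q *m col_mx K 1%:M); apply/eq_col_mx.
by rewrite -mul_col_mx mulmxA UXQ mul1mx.
Qed.

Lemma closed_loop_data (A : 'M[R]_n) (B : 'M[R]_(n, m)) U0 X0 X1 (K : 'M[R]_(m, n))
    (G : 'M[R]_(T, n)) :
  X1 = A *m X0 + B *m U0 -> U0 *m G = K -> X0 *m G = 1%:M -> A + B *m K = X1 *m G.
Proof. by move=> -> UG XG; rewrite mulmxDl -!mulmxA XG UG mulmx1. Qed.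

End DataMatrices.

Theorem theorem2 (R : realType) (n m ns nu T : nat)
  (A : 'M[R]_n) (B : 'M[R]_(n, m)) (Sm : 'M[R]_(ns, n)) (Um : 'M[R]_(nu, m))
  (lam : R) (ud : nat -> 'cV[R]_m) (xd : nat -> 'cV[R]_n) :
  Cset (polyset Sm) ->
  0 <= lam < 1 ->
  (forall k, (k < T)%N -> xd k.+1 = A *m xd k + B *m ud k) ->
  \rank (col_mx (dataU T ud) (dataX0 T xd)) = (m + n)%N ->
  let U0 := dataU T ud in
  let X0 := dataX0 T xd in
  let X1 := dataX1 T xd in
  let conds (GK : 'M[R]_(T, n)) (P : 'M[R]_ns) :=
    [/\ mxle (0 : 'M[R]_ns) P,
        mxle (P *m (const_mx 1 : 'cV[R]_ns)) (lam *: (const_mx 1 : 'cV[R]_ns)),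
        P *m Sm = Sm *m X1 *m GK,
        (forall s, vertex (polyset Sm) s -> mxle (Um *m U0 *m GK *m s) (const_mx 1))
      & 1%:M = X0 *m GK] in
  ((exists K : 'M[R]_(m, n),
      contractive (A + B *m K) (polyset Sm) lam /\ admissible K (polyset Sm) (polyset Um))
   <-> (exists GK P, conds GK P))
  /\ (forall K : 'M[R]_(m, n),
        contractive (A + B *m K) (polyset Sm) lam -> admissible K (polyset Sm) (polyset Um) ->
        exists GK P, conds GK P /\ K = U0 *m GK).
Proof.
move=> [_ [S_cpt _]] /andP[lam_ge0 _] dyn rk U0 X0 X1 conds.
have X1E : X1 = A *m X0 + B *m U0 := dataX1E dyn.
have data_conds K : contractive (A + B *m K) (polyset Sm) lam ->
    admissible K (polyset Sm) (polyset Um) -> exists GK P, conds GK P /\ K = U0 *m GK.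
  move=> /(contractive_polyhedralP _ _ lam_ge0)[P [P_ge0 P1 PS]].
  move=> /(admissible_verticesP _ _ S_cpt) adm.
  have [G [UG XG]] := data_right_inverse K rk.
  exists G, P; split=> //; split=> // [|s /adm].
  - by rewrite PS (closed_loop_data X1E UG XG) mulmxA.
  - by rewrite -UG /polyset /= !mulmxA.
split; last exact: data_conds.
split=> [[K [contrK admK]]|[GK [P [P_ge0 P1 PS vert XG]]]].
  by have [GK [P [GKP_conds _]]] := data_conds K contrK admK; exists GK, P.
exists (U0 *m GK).
have FE := closed_loop_data X1E erefl (esym XG).
split; last by apply/(admissible_verticesP _ _ S_cpt) => s /vert; rewrite /polyset /= !mulmxA.
by apply/(contractive_polyhedralP _ _ lam_ge0); exists P; rewrite FE mulmxA.
Qed.
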